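(* Let $[\gamma]\in J$ with $2\le l(M_\gamma)<p$ and $e([\gamma])=0$. Then there exists $[\gamma']\in J$ such that: (1) $l(M_{\gamma'})=l(M_\gamma)+1$; (2) $[\gamma']^{\rho^2}=[\gamma]^{\rho}$; (3) the $G$-fixed submodules coincide: $M_\gamma^G=M_{\gamma'}^G$; (4) if $l(M_\gamma)<p-1$, then $[\gamma']\in J_{p-1}$ and $e([\gamma'])=0$.
   Context: $p$ odd prime; $F$ a field containing a primitive $p$th root of unity $\xi_p$; $K=F(\sqrt[p]{a})$, $a\in F^\times$, cyclic of degree $p$; $G=\mathrm{Gal}(K/F)=\langle\sigma\rangle$ with $\sigma(\sqrt[p]{a})=\xi_p\sqrt[p]{a}$; $\rho=\sigma-1$. $J=K^\times/K^{\times p}$ as a multiplicative $\mathbb{F}_p[G]$-module with exponential action, $[\gamma]$ the class of $\gamma$; $J_i=\ker(\rho^i)$. $M_\gamma$ is the $\mathbb{F}_p[G]$-submodule generated by $[\gamma]$; its length $l(M_\gamma)$ is its $\mathbb{F}_p$-dimension, equivalently the least $i$ with $[\gamma]^{\rho^i}$ trivial. For $[\gamma]\in J_{p-1}$, the index $e([\gamma])\in\mathbb{F}_p$ is defined by $\xi_p^{e([\gamma])}=\sigma(\delta)/\delta$ where $\delta\in K$ is any $p$th root of $N_{K/F}(\gamma)$. *)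

From HB Require Import structures.
From mathcomp Require Import all_boot all_order all_algebra all_field.
Set Implicit Arguments. Unset Strict Implicit. Unset Printing Implicit Defensive.
Import GRing.Theory.
Local Open Scope ring_scope.

(* Setting: K : fieldExtType F, sigma : K -> K the generator of Gal(K/F).
   Elements of J = K^x / K^{x p} are represented by nonzero gamma : K;
   [gamma] is its class. *)

Section Defs.
Variables (F : fieldType) (K : fieldExtType F).

Definition pth_power (p : nat) (x : K) : Prop := exists y : K, x = y ^+ p.

Definition cls_eq (p : nat) (x y : K) : Prop := exists z : K, x = y * z ^+ p.

(* representative of [x]^rho, rho = sigma - 1 (exponential action) *)
Definition rho (s : K -> K) (x : K) : K := s x / x.

Definition rhoi (s : K -> K) (i : nat) (x : K) : K := iter i (rho s) x.

Definition length_is (p : nat) (s : K -> K) (g : K) (n : nat) : Prop :=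
  pth_power p (rhoi s n g) /\ (forall i, (i < n)%N -> ~ pth_power p (rhoi s i g)).

Definition in_Ji (p : nat) (s : K -> K) (i : nat) (x : K) : Prop :=
  pth_power p (rhoi s i x).

Definition normK (p : nat) (s : K -> K) (x : K) : K :=
  \prod_(i < p) iter i s x.

Definition e_index_is (p : nat) (s : K -> K) (xi : F) (x : K) (k : nat) : Prop :=
  exists delta : K, delta ^+ p = normK p s x /\ delta != 0 /\
                    s delta = (xi ^+ k)%:A * delta.

(* [x] lies in M_g, the F_p[G]-submodule generated by [g]:
   [x] = [prod_{i<p} sigma^i(g)^{c_i}] for some c_i *)
Definition in_M (p : nat) (s : K -> K) (g x : K) : Prop :=
  exists c : 'I_p -> nat, cls_eq p x (\prod_(i < p) (iter i s g) ^+ (c i)).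

Definition G_fixed (p : nat) (s : K -> K) (x : K) : Prop := cls_eq p (s x) x.

End Defs.

From HB Require Import structures.
From mathcomp Require Import all_boot all_order all_algebra all_field.
From mathcomp Require Import zify.
Import GRing.Theory.

Set Implicit Arguments.
Unset Strict Implicit.
Unset Printing Implicit Defensive.
Local Open Scope ring_scope.

(* Write x^q for the exponential action of q in Z[X] on K^x, X acting as
   sigma, so that rho^k is the action of (X - 1)^k.  Since e(g) = 0, some
   sigma-fixed d has d^p = N(g); then N(g/d) = 1 and Hilbert 90 gives b with
   rho(b) = g/d.  Any g' with rho(g') = g v, v fixed, satisfies
   rho^(k+1)(g') = rho^k(g) for k >= 1, which yields (1) and (2); it yields (3)
   because M_g is F_p[X]/((X - 1)^n), whose G-fixed part is generated by
   rho^(n-1)(g).  If n < p - 1, then rho^(p-1)(b) is a p-th power, hence so is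
   N(b) since (X - 1)^(p-1) = 1 + X + ... + X^(p-1) mod p; by Kummer theory,
   dividing b by a power alpha^k then makes N(b) the p-th power of a fixed
   element, i.e. e = 0, while rho(b) only changes by the fixed factor xi^-k. *)

Lemma prodfXz (L : fieldType) (I : finType) (f : I -> L) (c : int) :
  (\prod_i f i) ^ c = \prod_i f i ^ c.
Proof.
by apply: (big_morph (fun x => x ^ c)) => [x y|]; rewrite ?expfzMl ?exp1rz.
Qed.

Lemma poly_decomp_XsubC (R : comNzRingType) (q : {poly R}) (c : R) :
  exists q1, q = q1 * ('X - c%:P) + (q.[c])%:P.
Proof.
have : root (q - (q.[c])%:P) c by rewrite /root hornerD hornerN hornerC subrr.
by case/factor_theorem => q1 Eq; exists q1; rewrite -Eq subrK.
Qed.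

Section PolyAction.
Variables (F : fieldType) (K : fieldExtType F).

(* [pact s q x] is x^q, with X acting as s. *)
Definition pact (s : K -> K) (q : {poly int}) (x : K) : K :=
  \prod_(i < size q) iter i s x ^ q`_i.

Variable sigma : {rmorphism K -> K}.

Lemma fmorphXz (x : K) (c : int) : sigma (x ^ c) = sigma x ^ c.
Proof. by case: c => m; rewrite ?NegzE -?exprnN ?fmorphV rmorphXn. Qed.

Lemma iter_rmorphM k (x y : K) :
  iter k sigma (x * y) = iter k sigma x * iter k sigma y.
Proof. by elim: k => //= k ->; rewrite rmorphM. Qed.

Lemma iter_fmorphV k (x : K) : iter k sigma x^-1 = (iter k sigma x)^-1.
Proof. by elim: k => //= k ->; rewrite fmorphV. Qed.

Lemma iter_rmorphXn k (x : K) m : iter k sigma (x ^+ m) = iter k sigma x ^+ m.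
Proof. by elim: k => //= k ->; rewrite rmorphXn. Qed.

Lemma iter_fmorph_eq0 k (x : K) : (iter k sigma x == 0) = (x == 0).
Proof. by elim: k => //= k <-; rewrite fmorph_eq0. Qed.

Lemma pact_widen m (q : {poly int}) (x : K) : (size q <= m)%N ->
  \prod_(i < m) iter i sigma x ^ q`_i = pact sigma q x.
Proof.
move=> le_qm; rewrite /pact -(subnKC le_qm) big_split_ord /=.
rewrite [X in _ * X]big1 ?mulr1 // => i _.
by rewrite nth_default ?expr0z // leq_addr.
Qed.

Lemma pact_neq0 (q : {poly int}) (x : K) : x != 0 -> pact sigma q x != 0.
Proof.
by move=> x0; apply/prodf_neq0 => i _; rewrite expfz_neq0 ?iter_fmorph_eq0.
Qed.

Lemma pactC (c : int) (x : K) : pact sigma c%:P x = x ^ c.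
Proof. by rewrite -(pact_widen x (size_polyC_leq1 c)) big_ord1 coefC. Qed.

Lemma pact1 (x : K) : pact sigma 1 x = x.
Proof. by rewrite -polyC1 pactC expr1z. Qed.

Lemma pactDl (q1 q2 : {poly int}) (x : K) : x != 0 ->
  pact sigma (q1 + q2) x = pact sigma q1 x * pact sigma q2 x.
Proof.
move=> x0; set m := maxn (size q1) (size q2).
rewrite -!(pact_widen (m := m)) ?leq_maxl ?leq_maxr ?size_polyD // -big_split /=.
by apply: eq_bigr => i _; rewrite coefD expfzDr // iter_fmorph_eq0.
Qed.

Lemma pactZl (c : int) (q : {poly int}) (x : K) :
  pact sigma (c *: q) x = pact sigma q x ^ c.
Proof.
rewrite -(pact_widen x (size_scale_leq c q)) /pact prodfXz.
by apply: eq_bigr => i _; rewrite coefZ mulrC exprz_exp.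
Qed.

Lemma pactXMl (q : {poly int}) (x : K) :
  pact sigma ('X * q) x = sigma (pact sigma q x).
Proof.
have le_Xq : (size ('X * q)%R <= (size q).+1)%N.
  by rewrite (leq_trans (size_polyMleq _ _)) // size_polyX.
rewrite -(pact_widen x le_Xq) big_ord_recl coefXM expr0z mul1r rmorph_prod.
by apply: eq_bigr => i _; rewrite coefXM fmorphXz.
Qed.

Lemma pactMl (r q : {poly int}) (x : K) : x != 0 ->
  pact sigma (r * q) x = pact sigma r (pact sigma q x).
Proof.
move=> x0; elim/poly_ind: r => [|r c IH].
  by rewrite mul0r /pact size_poly0 !big_ord0.
have y0 := pact_neq0 q x0.
have -> : (r * 'X + c%:P) * q = 'X * (r * q) + c *: q.
  by rewrite mulrDl mul_polyC [r * 'X]mulrC mulrA.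
rewrite pactDl // pactXMl IH // pactZl.
by rewrite [r * 'X]mulrC pactDl // pactXMl pactC.
Qed.

Lemma pactMr (q : {poly int}) (x y : K) :
  pact sigma q (x * y) = pact sigma q x * pact sigma q y.
Proof.
by rewrite /pact -big_split; apply: eq_bigr => i _; rewrite iter_rmorphM expfzMl.
Qed.

Lemma pactXnr (q : {poly int}) (x : K) m :
  pact sigma q (x ^+ m) = pact sigma q x ^+ m.
Proof.
rewrite /pact -[RHS]/(_ ^ m%:Z) prodfXz; apply: eq_bigr => i _.
by rewrite iter_rmorphXn -[_ ^+ m]/(_ ^ m%:Z) exprzAC.
Qed.

Lemma rhoi_pact k (y : K) : y != 0 -> rhoi sigma k y = pact sigma (('X - 1) ^+ k) y.
Proof.
move=> y0; elim: k => [|k IH]; first by rewrite expr0 pact1.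
rewrite /rhoi iterS -/(rhoi sigma k y) IH exprS pactMl //.
have -> : ('X - 1 : {poly int}) = 'X * 1 + (-1) *: 1 by rewrite mulr1 scaleN1r.
by rewrite pactDl ?pact_neq0 // pactXMl pactZl pact1 exprN1.
Qed.

End PolyAction.

Section PowerClasses.
Variables (F : fieldType) (K : fieldExtType F) (p : nat).

Lemma cls_refl (x : K) : cls_eq p x x.
Proof. by exists 1; rewrite expr1n mulr1. Qed.

Lemma cls_trans (x y z : K) : cls_eq p x y -> cls_eq p y z -> cls_eq p x z.
Proof. by case=> t -> [u ->]; exists (u * t); rewrite exprMn mulrA. Qed.

Lemma cls_mul (x1 y1 x2 y2 : K) :
  cls_eq p x1 y1 -> cls_eq p x2 y2 -> cls_eq p (x1 * x2) (y1 * y2).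
Proof. by case=> t -> [u ->]; exists (t * u); rewrite exprMn mulrACA. Qed.

Lemma cls_mulpth (t x : K) : pth_power p t -> cls_eq p (t * x) x.
Proof. by case=> u ->; exists u; rewrite mulrC. Qed.

Lemma pth_power_divl (x y : K) :
  x != 0 -> pth_power p x -> pth_power p (x * y) -> pth_power p y.
Proof.
by move=> x0 [t Et] [u Eu]; exists (u / t); rewrite expr_div_n -Et -Eu mulrC mulKf.
Qed.

Lemma pth_expz_dvd (x : K) (c : int) :
  (p %| `|c|)%N -> pth_power p (x ^ c).
Proof.
move=> p_dvd_c; have /divzK <- : (p %| c)%Z by rewrite dvdzE.
rewrite -exprz_exp.
by exists (x ^ (c %/ p)%Z).
Qed.

Lemma pth_expz_coprime (y : K) (c : int) : prime p ->
  y != 0 -> ~~ (p %| `|c|)%N -> pth_power p (y ^ c) -> pth_power p y.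
Proof.
move=> p_pr y0 p_ndvd_c [t Et].
have [u [v]] := Bezoutz c p.
rewrite (eqP (_ : coprimez c p)); last first.
  by rewrite coprimezE /= coprime_sym prime_coprime.
move=> Euv; exists (t ^ u * y ^ v).
rewrite -[t ^+ p]/(t ^ Posz p) in Et.
rewrite exprMn -2![_ ^+ p]/(_ ^ p%:Z) exprzAC -Et !exprz_exp -expfzDr //.
rewrite -[y in LHS]expr1z -Euv; congr (_ ^ (_ + _)); apply: mulrC.
Qed.

Hypothesis p_gt0 : (0 < p)%N.

Lemma cls_sym (x y : K) : x != 0 -> cls_eq p x y -> cls_eq p y x.
Proof.
move=> x0 [t Et]; have t0 : t != 0.
  by apply: contraNneq x0 => t0; rewrite Et t0 expr0n gtn_eqF // mulr0.
by exists t^-1; rewrite Et exprVn mulfK // expf_neq0.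
Qed.

Lemma cls_pth (x y : K) :
  x != 0 -> cls_eq p x y -> pth_power p x -> pth_power p y.
Proof. by move=> x0 /(cls_sym x0) [t ->] [u ->]; exists (u * t); rewrite exprMn. Qed.

Lemma cls_expz_modp (y : K) (c : int) :
  y != 0 -> cls_eq p (y ^ c) (y ^+ `|(c %% p)%Z|%N).
Proof.
move=> y0; have c_mod : `|(c %% p)%Z|%N = c %% p :> int.
  by rewrite gez0_abs // modz_ge0 // eqz_nat -lt0n.
rewrite {1}(divz_eq c p) expfzDr // -exprz_exp -[y ^+ _]/(y ^ Posz _) c_mod mulrC.
by exists (y ^ (c %/ p)%Z).
Qed.

End PowerClasses.

Section RhoPowers.
Variables (F : fieldType) (K : fieldExtType F) (sigma : {rmorphism K -> K}).
Variable p : nat.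

Lemma rhoM (x y : K) : rho sigma (x * y) = rho sigma x * rho sigma y.
Proof. by rewrite /rho rmorphM invfM mulrACA. Qed.

Lemma rhoV (x : K) : rho sigma x^-1 = (rho sigma x)^-1.
Proof. by rewrite /rho fmorphV invrK invf_div mulrC. Qed.

Lemma rhoXn (x : K) m : rho sigma (x ^+ m) = rho sigma x ^+ m.
Proof. by rewrite /rho rmorphXn expr_div_n. Qed.

Lemma rho_neq0 (x : K) : x != 0 -> rho sigma x != 0.
Proof. by move=> x0; rewrite mulf_neq0 ?invr_eq0 ?fmorph_eq0. Qed.

Lemma rhoi_neq0 k (x : K) : x != 0 -> rhoi sigma k x != 0.
Proof. by move=> x0; elim: k => //= k; apply: rho_neq0. Qed.

Lemma rhoiS k (x : K) : rhoi sigma k.+1 x = rhoi sigma k (rho sigma x).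
Proof. exact: iterSr. Qed.

Lemma rhoiM k (x y : K) : rhoi sigma k (x * y) = rhoi sigma k x * rhoi sigma k y.
Proof. by elim: k => //= k IH; rewrite IH rhoM. Qed.

Lemma rhoi_fixed k (v : K) : v != 0 -> sigma v = v -> rhoi sigma k.+1 v = 1.
Proof.
move=> v0 sv; rewrite rhoiS /rho sv mulfV //.
by elim: k => //= k ->; rewrite /rho rmorph1 invr1 mulr1.
Qed.

Lemma G_fixedE (x : K) : x != 0 -> G_fixed p sigma x <-> pth_power p (rho sigma x).
Proof.
move=> x0; split=> [[w Ew]|[w Ew]]; exists w.
  by rewrite /rho Ew mulrAC mulfV ?mul1r.
by rewrite -Ew /rho mulrC mulfVK.
Qed.

Lemma pth_rhoi k (x : K) : pth_power p x -> pth_power p (rhoi sigma k x).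
Proof.
case=> t ->; exists (rhoi sigma k t).
by elim: k => //= k ->; rewrite rhoXn.
Qed.

Lemma pth_rhoi_leq k m (x : K) : (k <= m)%N ->
  pth_power p (rhoi sigma k x) -> pth_power p (rhoi sigma m x).
Proof. by move=> le_km /(pth_rhoi (m - k)); rewrite /rhoi -iterD subnK. Qed.

Lemma cls_rhoi k (x y : K) :
  cls_eq p x y -> cls_eq p (rhoi sigma k x) (rhoi sigma k y).
Proof.
case=> t ->; exists (rhoi sigma k t).
by elim: k => //= k ->; rewrite rhoM rhoXn.
Qed.

Lemma pth_pact q (x : K) : pth_power p x -> pth_power p (pact sigma q x).
Proof. by case=> t ->; exists (pact sigma q t); rewrite pactXnr. Qed.

End RhoPowers.

Section CyclicSubmodule.
Variables (F : fieldType) (K : fieldExtType F) (sigma : {rmorphism K -> K}).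
Variables (p : nat) (g : K) (n : nat).
Hypotheses (p_prime : prime p) (g_neq0 : g != 0).
Hypotheses (g_len : length_is p sigma g n) (n_gt0 : (0 < n)%N).

Let p_gt0 := prime_gt0 p_prime.
Local Notation act q := (pact sigma q g).
Local Notation Y := ('X - 1 : {poly int}).

Lemma act_neq0 q : act q != 0.
Proof. exact: pact_neq0. Qed.

Lemma rhoi_act k q : rhoi sigma k (act q) = act (Y ^+ k * q).
Proof. by rewrite pactMl // -rhoi_pact // act_neq0. Qed.

Lemma pth_act_length r : pth_power p (act (Y ^+ n * r)).
Proof. by rewrite mulrC pactMl // -rhoi_pact //; apply/pth_pact/g_len.1. Qed.

Lemma act_decomp k q1 (c : int) :
  act (Y ^+ k * (q1 * Y + c%:P)) = act (Y ^+ k.+1 * q1) * act (Y ^+ k) ^ c.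
Proof.
rewrite mulrDr pactDl // [Y ^+ k * c%:P]mulrC mul_polyC pactZl.
by rewrite [q1 * Y]mulrC mulrA -exprSr.
Qed.

Lemma socle_pth_dvd q : pth_power p (act (Y ^+ n.-1 * q)) -> (p %| `|q.[1]|)%N.
Proof.
have [q1 Eq] := poly_decomp_XsubC q 1; set c := q.[1] in Eq *.
rewrite Eq polyC1 act_decomp prednK // => pth_q.
apply/negPn/negP => p_ndvd_c; apply: (g_len.2 n.-1); first by rewrite prednK.
rewrite rhoi_pact //; apply: (pth_expz_coprime p_prime (act_neq0 _) p_ndvd_c).
exact: pth_power_divl (act_neq0 _) (pth_act_length q1) pth_q.
Qed.

(* In F_p[X]/((X - 1)^n), (X - 1)^(n-d) q = 0 forces (X - 1)^d | q. *)
Lemma ker_rhoi_sub_im d q : (d <= n)%N -> pth_power p (act (Y ^+ (n - d) * q)) ->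
  exists r, cls_eq p (act q) (act (Y ^+ d * r)).
Proof.
elim: d q => [|d IH] q le_dn pth_q.
  by exists q; rewrite expr0 mul1r; apply: cls_refl.
have p_dvd_c : (p %| `|q.[1]|)%N.
  apply: socle_pth_dvd; move: (pth_rhoi sigma d pth_q).
  by rewrite rhoi_act mulrA -exprD; have -> : (d + (n - d.+1) = n.-1)%N by lia.
have [q1 Eq] := poly_decomp_XsubC q 1; rewrite polyC1 in Eq.
have pth_q1 : pth_power p (act (Y ^+ (n - d) * q1)).
  move: pth_q; rewrite Eq act_decomp subnSK // [_ * _ ^ _]mulrC => pth_q.
  apply: (pth_power_divl _ _ pth_q); last exact: pth_expz_dvd.
  by rewrite expfz_neq0 ?act_neq0.
have [r q1_r] := IH q1 (ltnW le_dn) pth_q1.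
exists r; rewrite Eq -[_ + _]mul1r -(expr0 Y) act_decomp mulrC.
apply: cls_trans (cls_mulpth _ (pth_expz_dvd _ p_dvd_c)) _.
rewrite -(rhoi_act 1 q1) -[d.+1]add1n exprD -mulrA -rhoi_act.
exact: cls_rhoi.
Qed.

Lemma in_ME x : in_M p sigma g x <->
  exists2 q : {poly int}, (size q <= p)%N & cls_eq p x (act q).
Proof.
split=> [[c x_c]|[q le_qp x_q]].
  exists (\poly_(i < p) odflt 0 (omap (fun j : 'I_p => (c j)%:Z) (insub i))).
    exact: size_poly.
  apply: cls_trans x_c _; rewrite -(pact_widen sigma g (size_poly _ _)).
  under [X in cls_eq _ _ X]eq_bigr => i _ do rewrite coef_poly ltn_ord valK.
  exact: cls_refl.
exists (fun i : 'I_p => `|(q`_i %% p)%Z|%N).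
apply: cls_trans x_q _; rewrite -(pact_widen sigma g le_qp).
apply: (big_ind2 (cls_eq p)) => [|x1 y1 x2 y2|i _]; first exact: cls_refl.
  exact: cls_mul.
by apply: (cls_expz_modp p_gt0); rewrite iter_fmorph_eq0.
Qed.

Local Notation h := (rhoi sigma n.-1 g).

Lemma socle_in_M k : (n <= p)%N -> in_M p sigma g (h ^+ k).
Proof.
move=> le_np; apply/in_ME; exists (k%:Z *: Y ^+ n.-1).
  apply: leq_trans (size_scale_leq _ _) _.
  by rewrite -polyC1 size_exp_XsubC prednK.
by rewrite pactZl -rhoi_pact //; apply: cls_refl.
Qed.

Lemma fixed_in_M_socle x : x != 0 -> in_M p sigma g x -> G_fixed p sigma x ->
  exists k : nat, cls_eq p x (h ^+ k).
Proof.
move=> x0 /in_ME[q _ x_q] /(G_fixedE _ _ x0) rho_x.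
have pth_q : pth_power p (act (Y ^+ (n - n.-1) * q)).
  have -> : (n - n.-1 = 1)%N by lia.
  rewrite -rhoi_act; apply: (cls_pth p_gt0 (rhoi_neq0 sigma 1 x0)) rho_x.
  exact: cls_rhoi.
have [r x_r] := ker_rhoi_sub_im (leq_pred n) pth_q.
have [r1 Er] := poly_decomp_XsubC r 1.
rewrite Er polyC1 act_decomp prednK // in x_r.
exists `|(r.[1] %% p)%Z|%N.
apply: cls_trans x_q _; apply: cls_trans x_r _.
apply: cls_trans (cls_mulpth _ (pth_act_length _)) _.
by rewrite -rhoi_pact //; apply: (cls_expz_modp p_gt0); rewrite rhoi_neq0.
Qed.

Lemma in_M_G_fixedE x : x != 0 -> (n <= p)%N ->
  (in_M p sigma g x /\ G_fixed p sigma x) <->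
  (G_fixed p sigma x /\ exists k : nat, cls_eq p x (h ^+ k)).
Proof.
move=> x0 le_np; split=> [[xM xG]|[xG [k x_hk]]]; split=> //.
  exact: fixed_in_M_socle.
have /in_ME[q le_qp hk_q] := socle_in_M k le_np.
by apply/in_ME; exists q => //; apply: cls_trans x_hk hk_q.
Qed.

End CyclicSubmodule.

Section RhoAntiderivative.
Variables (F : fieldType) (K : fieldExtType F) (sigma : {rmorphism K -> K}).
Variables (p : nat) (g g' v : K) (n : nat).
Hypotheses (v_neq0 : v != 0) (v_fixed : sigma v = v) (rho_g' : rho sigma g' = g * v).

Lemma rhoiS_antiderivative k : (0 < k)%N -> rhoi sigma k.+1 g' = rhoi sigma k g.
Proof.
case: k => // k _.
by rewrite [LHS]rhoiS rho_g' rhoiM (rhoi_fixed _ v_neq0 v_fixed) mulr1.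
Qed.

Lemma antiderivative_cls : cls_eq p (rhoi sigma 2 g') (rhoi sigma 1 g).
Proof. by rewrite rhoiS_antiderivative //; apply: cls_refl. Qed.

Hypotheses (g_len : length_is p sigma g n) (n_gt1 : (1 < n)%N).

Let n_gt0 : (0 < n)%N := ltnW n_gt1.

Lemma rhoi_length_antiderivative : rhoi sigma n g' = rhoi sigma n.-1 g.
Proof. by rewrite -rhoiS_antiderivative ?prednK // -ltnS prednK. Qed.

Lemma pth_rhoi_antiderivative m : (n < m)%N -> pth_power p (rhoi sigma m g').
Proof.
case: m => // m; rewrite ltnS => le_nm.
rewrite rhoiS_antiderivative; last exact: leq_trans n_gt0 le_nm.
exact: pth_rhoi_leq le_nm g_len.1.
Qed.

Lemma antiderivative_length : length_is p sigma g' n.+1.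
Proof.
split=> [|i lt_in pth_i]; first exact: pth_rhoi_antiderivative.
apply: (g_len.2 n.-1); first by rewrite prednK.
by rewrite -rhoi_length_antiderivative; apply: pth_rhoi_leq pth_i.
Qed.

Hypotheses (p_prime : prime p) (g_neq0 : g != 0) (g'_neq0 : g' != 0).

Lemma antiderivative_fixed_in_M x : x != 0 -> (n < p)%N ->
  (in_M p sigma g x /\ G_fixed p sigma x) <->
  (in_M p sigma g' x /\ G_fixed p sigma x).
Proof.
move=> x0 lt_np.
rewrite (in_M_G_fixedE p_prime g_neq0 g_len n_gt0 x0 (ltnW lt_np)).
rewrite (in_M_G_fixedE p_prime g'_neq0 antiderivative_length (ltn0Sn n) x0 lt_np).
by rewrite /= rhoi_length_antiderivative.
Qed.

End RhoAntiderivative.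

Lemma Xsub1_expn_pred_modp p : prime p -> odd p ->
  exists w : {poly int}, ('X - 1) ^+ p.-1 = \poly_(i < p) 1 + p%:Z *: w.
Proof.
move=> p_pr p_odd; set D : {poly int} := ('X - 1) ^+ p.-1 - \poly_(i < p) 1.
have D_Fp : map_poly (intr : int -> 'F_p) D = 0.
  have Frobenius : ('X - 1 : {poly 'F_p}) ^+ p = 'X ^+ p - 1.
    rewrite exprDn_pchar ?(pnatE _ p_pr) ?pchar_poly ?pchar_Fp //.
    by rewrite -signr_odd p_odd expr1.
  have : ('X - 1 : {poly 'F_p}) * map_poly intr D = 0.
    rewrite rmorphB rmorphXn /= rmorphB /= map_polyX rmorph1 poly_def rmorph_sum.
    under eq_bigr => k _ do rewrite /= scale1r map_polyXn.
    by rewrite mulrBr -exprS prednK ?prime_gt0 // Frobenius -subrX1 subrr.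
  by move/eqP; rewrite mulf_eq0 -polyC1 polyXsubC_eq0 => /eqP.
have p_dvd i : (p %| D`_i)%Z.
  by rewrite (dvdz_pcharf (pchar_Fp p_pr)) -coef_map D_Fp coef0.
exists (\poly_(i < size D) (D`_i %/ p)%Z); apply/polyP => i.
rewrite coefD coefZ (coef_poly (size D)); case: ltnP => [_|le_Di].
  by rewrite mulrC divzK // /D coefB [RHS]addrC subrK.
by apply/eqP; rewrite mulr0 addr0 -subr_eq0 -coefB -/D nth_default.
Qed.

Section Norm.
Variables (F : fieldType) (K : fieldExtType F) (sigma : {rmorphism K -> K}).
Variable p : nat.
Local Notation N := (normK p sigma).

Lemma normKM (x y : K) : N (x * y) = N x * N y.
Proof. by rewrite /normK -big_split; apply: eq_bigr => i _; rewrite iter_rmorphM. Qed.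

Lemma normKV (x : K) : N x^-1 = (N x)^-1.
Proof. by rewrite /normK -prodfV; apply: eq_bigr => i _; rewrite iter_fmorphV. Qed.

Lemma normKXn (x : K) k : N (x ^+ k) = N x ^+ k.
Proof. by rewrite /normK -prodrXl; apply: eq_bigr => i _; rewrite iter_rmorphXn. Qed.

Lemma normK_neq0 (x : K) : x != 0 -> N x != 0.
Proof. by move=> x0; apply/prodf_neq0 => i _; rewrite iter_fmorph_eq0. Qed.

Lemma normK_fixed (d : K) : sigma d = d -> N d = d ^+ p.
Proof.
move=> sd; rewrite /normK (eq_bigr (fun _ => d)) ?prodr_const ?card_ord //.
by move=> i _; elim: (nat_of_ord i) => //= k ->.
Qed.

Lemma rhoi_pred_normK (b : K) : prime p -> odd p -> b != 0 ->
  exists2 W, W != 0 & rhoi sigma p.-1 b = N b * W ^+ p.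
Proof.
move=> p_pr p_odd b0; have [w Ew] := Xsub1_expn_pred_modp p_pr p_odd.
exists (pact sigma w b); first exact: pact_neq0.
rewrite rhoi_pact // Ew pactDl // pactZl -(pact_widen sigma b (size_poly _ _)).
by congr (_ * _); apply: eq_bigr => i _; rewrite coef_poly ltn_ord expr1z.
Qed.

End Norm.

Section CyclicKummer.
Variables (F : fieldType) (K : fieldExtType F) (p : nat) (xi a : F) (alpha : K).
Variable sigma : 'AEnd(K).
Hypotheses (p_prime : prime p) (p_odd : odd p) (xi_prim : p.-primitive_root xi).
Hypotheses (alpha_p : alpha ^+ p = a%:A) (alpha_gen : <<1%VS; alpha>>%VS = fullv).
Hypotheses (dimK : \dim {:K} = p) (sigma_alpha : sigma alpha = xi%:A * alpha).

Let p_gt0 := prime_gt0 p_prime.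
Local Notation z := (xi%:A : K).
Local Notation N := (normK p sigma).

Lemma prim_root_xiA : p.-primitive_root z.
Proof. by rewrite -[z]/(in_alg K xi) fmorph_primitive_root. Qed.

Lemma xiA_neq0 : z != 0.
Proof. by rewrite (prim_root_eq0 prim_root_xiA) -lt0n. Qed.

Lemma alpha_neq0 : alpha != 0.
Proof.
apply/eqP=> alpha0; move: dimK p_prime.
by rewrite -alpha_gen alpha0 Fadjoin0 dimv1 => <-.
Qed.

Lemma sigma_scalar (c : F) : sigma c%:A = c%:A.
Proof. by rewrite linearZ /= rmorph1. Qed.

Lemma iter_sigma_alpha k : iter k sigma alpha = z ^+ k * alpha.
Proof.
elim: k => [|k IH]; first by rewrite mul1r.
by rewrite iterS IH rmorphM rmorphXn /= sigma_scalar sigma_alpha mulrA -exprSr.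
Qed.

Lemma iter_sigma_order (x : K) : iter p sigma x = x.
Proof.
have iterE k y : (iter k (comp_ahom sigma) \1%AF) y = iter k sigma y.
  by elim: k => [|k IH] /=; rewrite ?id_lfunE // comp_lfunE IH.
have : (<<1; alpha>>%AS <= fixedSpace (iter p (comp_ahom sigma) \1%AF))%VS.
  apply/FadjoinP; split; first exact: sub1v.
  apply/fixedSpaceP; rewrite iterE iter_sigma_alpha.
  by rewrite (prim_expr_order prim_root_xiA) mul1r.
have x_gen : x \in <<1; alpha>>%VS by rewrite alpha_gen memvf.
by move/fixedSpacesP/(_ x x_gen); rewrite iterE.
Qed.

Lemma sigma_normK (x : K) : sigma (N x) = N x.
Proof.
rewrite /normK rmorph_prod -(prednK p_gt0) big_ord_recr big_ord_recl /= mulrC.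
rewrite -[sigma (iter _ _ x)]/(iter p.-1.+1 sigma x) prednK // iter_sigma_order.
by congr (_ * _); apply: eq_bigr.
Qed.

Lemma normK_alpha : N alpha = a%:A.
Proof.
rewrite /normK (eq_bigr (fun i : 'I_p => z ^+ i * alpha)) => [|i _]; last first.
  exact: iter_sigma_alpha.
rewrite big_split /= prodr_const card_ord alpha_p prodrXr.
(* N(alpha) = xi^C(p,2) a, and p | C(p,2) as p is odd. *)
have -> : (\sum_(i < p) i = 'C(p, 2))%N by rewrite -bin2_sum big_mkord.
rewrite (eqP (_ : z ^+ 'C(p, 2) == 1)) ?mul1r //.
by rewrite -(prim_order_dvd prim_root_xiA) prime_dvd_bin // odd_prime_gt2.
Qed.

Lemma sum_prim_root_expn0 i : (0 < i < p)%N -> \sum_(j < p) (z ^+ i) ^+ j = 0.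
Proof.
move=> /andP[i_gt0 lt_ip]; set w := z ^+ i.
have w_neq1 : w != 1 by rewrite -(prim_order_dvd prim_root_xiA) gtnNdvd.
have : (w - 1) * \sum_(j < p) w ^+ j = 0.
  by rewrite -subrX1 -exprM mulnC exprM (prim_expr_order prim_root_xiA) expr1n subrr.
by move/eqP; rewrite mulf_eq0 subr_eq0 (negbTE w_neq1) => /eqP.
Qed.

Let partial_norm (x : K) i := \prod_(k < i) iter k sigma x.

Let resolvent (x t : K) := \sum_(i < p) partial_norm x i * iter i sigma t.

Lemma resolvent_cocycle (x t : K) :
  N x = 1 -> x * sigma (resolvent x t) = resolvent x t.
Proof.
have normS i : x * sigma (partial_norm x i) = partial_norm x i.+1.
  by rewrite /partial_norm big_ord_recl rmorph_prod.
have [p' Ep] : exists p', p = p'.+1 by exists p.-1; rewrite prednK.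
move: (iter_sigma_order t); rewrite /normK /resolvent Ep => sigma_t Nx1.
rewrite rmorph_sum mulr_sumr big_ord_recr big_ord_recl /= addrC; congr (_ + _).
  by rewrite rmorphM mulrA normS [partial_norm _ _]Nx1 /partial_norm big_ord0 !mul1r.
by apply: eq_bigr => i _; rewrite rmorphM mulrA normS.
Qed.

(* Summing S j over j leaves p times the i = 0 term, by orthogonality of the
   powers of xi. *)
Lemma exists_resolvent_neq0 (x : K) : exists t, resolvent x t != 0.
Proof.
pose S j := \sum_(i < p) partial_norm x i * (z ^+ i) ^+ j.
have resolvent_alpha j : resolvent x (alpha ^+ j) = S j * alpha ^+ j.
  rewrite /resolvent /S mulr_suml; apply: eq_bigr => i _.
  by rewrite iter_rmorphXn iter_sigma_alpha exprMn mulrA.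
have [j Sj_neq0] : exists j : 'I_p, S j != 0.
  apply/existsP; apply: contraLR (prim_root_natf_neq0 prim_root_xiA).
  rewrite negb_exists => /forallP S0; apply/negPn/eqP.
  have sumS0 : \sum_(j < p) S j = 0 by apply: big1 => j _; apply/eqP/negbNE.
  apply: (etrans _ sumS0); rewrite /S exchange_big.
  rewrite (bigD1 (Ordinal p_gt0)) //= [X in _ + X]big1 => [|i ne_i0]; last first.
    rewrite -mulr_sumr sum_prim_root_expn0 ?mulr0 // ltn_ord andbT lt0n.
    by apply: contraNneq ne_i0 => i0; apply/eqP/val_inj.
  rewrite addr0 /partial_norm big_ord0 (eq_bigr (fun _ => 1)) => [|j _].
    by rewrite sumr_const card_ord.
  by rewrite expr0 expr1n mulr1.
by exists (alpha ^+ j); rewrite resolvent_alpha mulf_neq0 ?expf_neq0 ?alpha_neq0.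
Qed.

Lemma Hilbert90 (x : K) : N x = 1 -> exists2 y, y != 0 & x * sigma y = y.
Proof.
move=> Nx1; have [t rt] := exists_resolvent_neq0 x.
by exists (resolvent x t); last exact: resolvent_cocycle.
Qed.

Lemma e_index0_antiderivative (g : K) : g != 0 -> e_index_is p sigma xi g 0 ->
  exists b v : K, [/\ b != 0, v != 0, sigma v = v & rho sigma b = g * v].
Proof.
move=> g0 [d [Ed [d0]]]; rewrite expr0 scale1r mul1r => sd.
have [y y0 Hy] : exists2 y, y != 0 & g / d * sigma y = y.
  apply: Hilbert90.
  by rewrite normKM normKV (normK_fixed p sd) Ed mulfV // normK_neq0.
exists y^-1, d^-1; split; rewrite ?invr_eq0 //; first by rewrite fmorphV /= sd.
by rewrite rhoV /rho invf_div -{1}Hy mulfK // fmorph_eq0.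
Qed.

Lemma rho_alpha : rho sigma alpha = z.
Proof. by rewrite /rho sigma_alpha mulfK ?alpha_neq0. Qed.

Lemma e_index0_alpha_correction (b : K) : b != 0 -> pth_power p (N b) ->
  exists k, e_index_is p sigma xi (b / alpha ^+ k) 0.
Proof.
move=> b0 [t Nb_t]; have Nb0 : N b != 0 by rewrite normK_neq0.
have t0 : t != 0.
  by apply: contraNneq Nb0 => t0; rewrite Nb_t t0 expr0n gtn_eqF.
have : (sigma t / t) ^+ p = 1.
  by rewrite expr_div_n -rmorphXn /= -Nb_t sigma_normK mulfV.
case/(prim_rootP prim_root_xiA) => i Ei.
have sigma_t : sigma t = z ^+ i * t by rewrite -Ei mulfVK.
exists i, (t / alpha ^+ i); split; last split.
- rewrite normKM normKV normKXn normK_alpha Nb_t -alpha_p expr_div_n.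
  by rewrite -!exprM mulnC.
- by rewrite mulf_neq0 ?invr_eq0 ?expf_neq0 ?alpha_neq0.
rewrite expr0 scale1r mul1r rmorphM fmorphV rmorphXn /= sigma_alpha sigma_t.
by rewrite exprMn invfM mulrACA mulfV ?mul1r // expf_neq0 // xiA_neq0.
Qed.

Lemma e_index0_div_alpha_expn (b : K) : b != 0 -> pth_power p (rhoi sigma p.-1 b) ->
  exists k, e_index_is p sigma xi (b / alpha ^+ k) 0.
Proof.
move=> b0; have [W W0 ->] := rhoi_pred_normK sigma p_prime p_odd b0.
rewrite mulrC => pth_WNb; apply: e_index0_alpha_correction b0 _.
by apply: (pth_power_divl _ _ pth_WNb); [rewrite expf_neq0 | exists W].
Qed.

Lemma antiderivative_div_alpha_expn (g b v : K) k :
  v != 0 -> sigma v = v -> rho sigma b = g * v ->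
  exists v', [/\ v' != 0, sigma v' = v' & rho sigma (b / alpha ^+ k) = g * v'].
Proof.
move=> v0 sv rho_b; exists (v / z ^+ k); split.
- by rewrite mulf_neq0 ?invr_eq0 ?expf_neq0 ?xiA_neq0.
- by rewrite rmorphM fmorphV rmorphXn /= sigma_scalar sv.
by rewrite rhoM rhoV rhoXn rho_alpha rho_b mulrA.
Qed.

End CyclicKummer.

Theorem lemma6 (F : fieldType) (K : fieldExtType F) (p : nat)
    (xi : F) (a : F) (alpha : K) (sigma : 'AEnd(K)) :
    prime p -> odd p ->
    p.-primitive_root xi ->
    alpha ^+ p = a%:A ->
    <<1%VS; alpha>>%VS = fullv ->
    \dim {:K} = p ->
    sigma alpha = xi%:A * alpha ->
  forall (g : K) (n : nat),
    g != 0 ->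
    length_is p sigma g n ->
    (2 <= n < p)%N ->
    e_index_is p sigma xi g 0 ->
  exists g' : K,
    [/\ g' != 0,
        length_is p sigma g' n.+1,
        cls_eq p (rhoi sigma 2 g') (rhoi sigma 1 g),
        (forall x : K, x != 0 ->
           (in_M p sigma g x /\ G_fixed p sigma x) <->
           (in_M p sigma g' x /\ G_fixed p sigma x)) &
        ((n < p.-1)%N -> in_Ji p sigma p.-1 g' /\ e_index_is p sigma xi g' 0)].
Proof.
move=> p_pr p_odd xi_prim alpha_p alpha_gen dimK sigma_alpha g n g0 g_len.
case/andP=> n_gt1 lt_np e_g.
have [b [v [b0 v0 sv rho_b]]] :=
  e_index0_antiderivative p_pr xi_prim alpha_gen dimK sigma_alpha g0 e_g.
have [k e_k] : exists k, (n < p.-1)%N -> e_index_is p sigma xi (b / alpha ^+ k) 0.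
  case: (ltnP n p.-1) => [lt_n_p1|]; last by exists 0%N.
  have [k e_k] := e_index0_div_alpha_expn p_pr p_odd xi_prim alpha_p alpha_gen dimK
    sigma_alpha b0 (pth_rhoi_antiderivative v0 sv rho_b g_len n_gt1 lt_n_p1).
  by exists k.
have [v' [v'0 sv' rho_g']] := antiderivative_div_alpha_expn
  p_pr xi_prim alpha_gen dimK sigma_alpha k v0 sv rho_b.
have g'0 : b / alpha ^+ k != 0.
  by rewrite mulf_neq0 ?invr_eq0 ?expf_neq0 ?(alpha_neq0 p_pr alpha_gen dimK).
exists (b / alpha ^+ k); split=> //.
- exact: antiderivative_length v'0 sv' rho_g' g_len n_gt1.
- exact: antiderivative_cls v'0 sv' rho_g'.
- move=> x x0.
  exact: antiderivative_fixed_in_M v'0 sv' rho_g' g_len n_gt1 p_pr g0 g'0 x x0 lt_np.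
move=> lt_n_p1; split; last exact: e_k.
exact: pth_rhoi_antiderivative v'0 sv' rho_g' g_len n_gt1 _ lt_n_p1.
Qed.
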